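(* During every execution of the algorithm, at least one active candidate exists.
   Context: A broadcast network is modeled as a connected graph G(V,E) with n nodes. In the fragment-level leader election algorithm, nodes are partitioned into fragments, each consisting of an active candidate and its supporting nodes; id(F) = (size, candidate identity) ordered lexicographically (by size, then by identity); external edges are directed from the larger-id to the smaller-id fragment. Initially each node is an active candidate of a size-1 fragment in state wait. A fragment with an outgoing edge is in wait; one whose external edges are all incoming enters work, counts its size new_size, and compares with its maximal neighbor F': if new_size > X · size(F') (X > 1) it remains active, updates its size, makes all external edges outgoing and returns to wait; otherwise its candidate becomes inactive and the fragment joins F'. A fragment with no external edges is in state leader. A candidate is active while its fragment is in state work, wait or leader. *)

From HB Require Import structures.
From mathcomp Require Import all_boot all_order all_algebra.
Set Implicit Arguments. Unset Strict Implicit. Unset Printing Implicit Defensive.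
Import Order.TTheory GRing.Theory Num.Theory.
Local Open Scope ring_scope.

Inductive cstate := Wait | Work | Leader | Inactive.

Section Algo.
Variable n : nat.
(* nodes are 'I_n; the identity of a node is its value as a nat *)
Notation V := 'I_n.

(* A configuration:
   - cand v : the candidate of the fragment containing v (fragment membership),
   - sz c   : the size recorded by candidate c (size(F) for F with candidate c),
   - st c   : the state of candidate c (state of its fragment, or Inactive). *)
Record config := Config {
  cand : V -> V;
  sz : V -> nat;
  st : V -> cstate }.

Definition init_config : config :=
  Config (fun v => v) (fun _ => 1%N) (fun _ => Wait).

Definition id_lt (s1 : nat) (c1 : V) (s2 : nat) (c2 : V) : bool :=
  (s1 < s2)%N || ((s1 == s2) && (c1 < c2)%N).

Definition fragment (k : config) (c : V) : {set V} := [set v | cand k v == c].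

Definition ext_edge (e : rel V) (k : config) (c u w : V) : bool :=
  [&& e u w, cand k u == c & cand k w != c].

Definition neighbor (e : rel V) (k : config) (c c' : V) : Prop :=
  exists u w, ext_edge e k c u w /\ cand k w = c'.

(* an external edge (u,w) of F is incoming iff id(F) < id(F_w) *)
Definition all_incoming (e : rel V) (k : config) (c : V) : Prop :=
  forall u w, ext_edge e k c u w ->
    id_lt (sz k c) c (sz k (cand k w)) (cand k w).

Definition has_ext (e : rel V) (k : config) (c : V) : Prop :=
  exists u w, ext_edge e k c u w.

Definition max_neighbor (e : rel V) (k : config) (c c' : V) : Prop :=
  neighbor e k c c' /\
  forall c'', neighbor e k c c'' -> c'' != c' -> id_lt (sz k c'') c'' (sz k c') c'.

Definition upd {T : Type} (f : V -> T) (c : V) (x : T) : V -> T :=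
  fun v => if v == c then x else f v.

Variables (R : realFieldType) (X : R).

Inductive step (e : rel V) : config -> config -> Prop :=
  | StepToWork k c :
      st k c = Wait -> has_ext e k c -> all_incoming e k c ->
      step e k (Config (cand k) (sz k) (upd (st k) c Work))
  | StepToLeader k c :
      st k c = Wait -> ~ has_ext e k c ->
      step e k (Config (cand k) (sz k) (upd (st k) c Leader))
  | StepGrow k c c' :
      st k c = Work -> max_neighbor e k c c' ->
      X * (sz k c')%:R < (#|fragment k c|)%:R ->
      step e k (Config (cand k) (upd (sz k) c #|fragment k c|) (upd (st k) c Wait))
  | StepJoin k c c' :
      st k c = Work -> max_neighbor e k c c' ->
      ~ (X * (sz k c')%:R < (#|fragment k c|)%:R) ->
      step e k (Config (fun v => if cand k v == c then c' else cand k v)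
                       (sz k) (upd (st k) c Inactive)).

End Algo.

Definition active (n : nat) (k : config n) (c : 'I_n) : Prop :=
  st k c = Wait \/ st k c = Work \/ st k c = Leader.

Definition connected_graph (n : nat) (e : rel 'I_n) : Prop :=
  symmetric e /\ irreflexive e /\ forall u v, connect e u v.

(** Every node belongs to the fragment of an active candidate, and this
    invariant is preserved by every step: the only step that deactivates a
    candidate [c] also hands all of [c]'s nodes over to a neighbouring fragment
    [c' <> c], whose candidate is active by the invariant.  Since the graph has
    a node, some candidate is active. *)
From HB Require Import structures.
From mathcomp Require Import all_boot all_order all_algebra.
Import Order.TTheory GRing.Theory Num.Theory.
Local Open Scope ring_scope.

Lemma invariant_prefix (T : Type) (P : T -> Prop) (r : T -> T -> Prop)
    (s : nat -> T) (len : nat) :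
  P (s 0%N) -> (forall x y, r x y -> P x -> P y) ->
  (forall i, (i < len)%N -> r (s i) (s i.+1)) ->
  forall i, (i <= len)%N -> P (s i).
Proof.
move=> P0 r_P rs; elim=> [|i IHi] le_i_len //.
by apply: r_P (rs i le_i_len) _; apply: IHi; apply: ltnW.
Qed.

Definition active_state (s : cstate) : bool :=
  if s is Inactive then false else true.

Lemma activeP (n : nat) (k : config n) (c : 'I_n) :
  reflect (active k c) (active_state (st k c)).
Proof.
rewrite /active; case: (st k c); constructor;
  by [left | right; left | right; right | case=> [|[]]].
Qed.

Definition cands_active {n : nat} (k : config n) : Prop :=
  forall v, active k (cand k v).

Lemma cands_active_init (n : nat) : cands_active (init_config n).
Proof. by move=> v; left. Qed.

Lemma upd_st_active (n : nat) (k : config n) (c x : 'I_n) (s : cstate) :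
  active_state s -> active_state (st k x) -> active_state (upd (st k) c s x).
Proof. by rewrite /upd; case: (x == c). Qed.

Lemma step_cands_active (n : nat) (e : rel 'I_n) (R : realFieldType) (X : R)
    (k k' : config n) :
  step X e k k' -> cands_active k -> cands_active k'.
Proof.
case=> {k k'} [k c _ _ _|k c _ _|k c c' _ _ _|
               k c _ _ [[u [w [/and3P[_ _ w_out] <-]]] _] _] actk v;
  apply/activeP; move/activeP: (actk v) => /=; try exact: upd_st_active.
rewrite /upd; case cv_c: (cand k v == c); last by rewrite cv_c.
by rewrite (negbTE w_out) => _; apply/activeP.
Qed.

Theorem lemma1 (n : nat) (e : rel 'I_n) (R : realFieldType) (X : R)
  (execution : nat -> config n) (len : nat) :
  (0 < n)%N -> connected_graph e -> 1 < X ->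
  execution 0%N = init_config n ->
  (forall i, (i < len)%N -> step X e (execution i) (execution i.+1)) ->
  forall i, (i <= len)%N -> exists c : 'I_n, active (execution i) c.
Proof.
move=> n_gt0 _ _ exec0 exec_step i le_i_len.
have exec_cands_active : cands_active (execution i).
  apply: (@invariant_prefix _ (@cands_active n)) exec_step i le_i_len.
  - by rewrite exec0; apply: cands_active_init.
  - by move=> k k'; apply: step_cands_active.
by exists (cand (execution i) (Ordinal n_gt0)).
Qed.
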